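(* Let $P_1$ be the uniform distribution on $[0,\frac12]$, let $P_2$ be the uniform distribution on $[\frac34,1]$, and let $P=\frac34P_1+\frac14P_2$. Then the set $\{\frac18,\frac38,\frac78\}$ forms an optimal set of three-means for $P$, with quantization error $V_3=\frac1{192}$.
   Context: For a finite set $\alpha\subset\mathbb R$, $V(P;\alpha)=\int\min_{a\in\alpha}(x-a)^2\,dP(x)$; $V_n=\inf\{V(P;\alpha):\mathrm{card}(\alpha)\le n\}$; an optimal set of $n$-means is a set $\alpha$ with $\mathrm{card}(\alpha)\le n$ and $V(P;\alpha)=V_n$. *)

From HB Require Import structures.
From mathcomp Require Import all_boot all_order all_algebra.
From mathcomp Require Import finmap.
From mathcomp Require Import all_classical all_reals all_analysis.
Set Implicit Arguments. Unset Strict Implicit. Unset Printing Implicit Defensive.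
Import Order.TTheory GRing.Theory Num.Theory.
Local Open Scope classical_set_scope.
Local Open Scope ring_scope.

Definition quant_err (R : realType) (P : {measure set (measurableTypeR R) -> \bar R})
    (alpha : {fset R}) : \bar R :=
  (\int[P]_x \big[Order.min/+oo%E]_(a <- alpha) ((x - a) ^+ 2)%:E)%E.

Definition Vn (R : realType) (P : {measure set (measurableTypeR R) -> \bar R}) (n : nat) : \bar R :=
  ereal_inf [set quant_err P beta | beta in [set beta : {fset R} | (#|` beta| <= n)%N]].

Definition optimal_n_means (R : realType) (P : {measure set (measurableTypeR R) -> \bar R})
    (n : nat) (alpha : {fset R}) : Prop :=
  (#|` alpha| <= n)%N /\ quant_err P alpha = Vn P n.

Lemma lt_0_half (R : realType) : (0 : R) < 1 / 2.
Proof. by rewrite divr_gt0 // ltr0n. Qed.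

Lemma lt_34_1 (R : realType) : (3 / 4 : R) < 1.
Proof. by rewrite ltr_pdivrMr ?ltr0n // mul1r ltr_nat. Qed.

Definition P1 (R : realType) : {measure set (measurableTypeR R) -> \bar R} := uniform_prob (lt_0_half R).
Definition P2 (R : realType) : {measure set (measurableTypeR R) -> \bar R} := uniform_prob (lt_34_1 R).

Definition Pmix (R : realType) : {measure set (measurableTypeR R) -> \bar R} :=
  measure_add (mscale (3 / 4 : R)%:nng (P1 R)) (mscale (1 / 4 : R)%:nng (P2 R)).

(* Sort the at most three means a1 <= a2 <= a3.  As P has density 3/2 on
   [0, 1/2] and 1 on [3/4, 1], the distortion is 3/2 times the integral of the
   squared distance to the nearest mean over the left block plus the integral
   over the right block.  The midpoint 5/8 of the gap acts as a barrier: for a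
   point of one block, a mean beyond 5/8 is farther away than 5/8 itself.
   Cutting a block where the barrier becomes the nearest point, its cost is at
   least the cost L^3/12 (one mean) or L^3/48 (two means) of the part of
   length L before the cut plus the exact barrier cost after it, a polynomial
   in the cut point.  Splitting cases on how many means lie left of 5/8, the
   total is at least 1/192, which {1/8, 3/8, 7/8} attains. *)

From HB Require Import structures.
From mathcomp Require Import all_boot all_order all_algebra.
From mathcomp Require Import finmap.
From mathcomp Require Import all_classical all_reals all_analysis.
From mathcomp Require Import ring lra measurable_realfun.
Set Implicit Arguments. Unset Strict Implicit.
Import Order.TTheory GRing.Theory Num.Theory.
Import numFieldNormedType.Exports.
Local Open Scope classical_set_scope.
Local Open Scope ring_scope.

Section RealFacts.
Context (R : realType).
Implicit Types a c d m p q t x : R.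

Lemma sqrB_le_left x p q : p <= q -> x <= (p + q) / 2 -> (x - p) ^+ 2 <= (x - q) ^+ 2.
Proof.
move=> pq xm; have : 0 <= (q - p) * (p + q - 2 * x) by apply: mulr_ge0; lra.
suff -> : (q - p) * (p + q - 2 * x) = (x - q) ^+ 2 - (x - p) ^+ 2 by rewrite subr_ge0.
by ring.
Qed.

Lemma sqrB_le_right x p q : p <= q -> (p + q) / 2 <= x -> (x - q) ^+ 2 <= (x - p) ^+ 2.
Proof.
move=> pq xm; have : 0 <= (q - p) * (2 * x - p - q) by apply: mulr_ge0; lra.
suff -> : (q - p) * (2 * x - p - q) = (x - p) ^+ 2 - (x - q) ^+ 2 by rewrite subr_ge0.
by ring.
Qed.

Lemma sqr_moment_ge a c d : c <= d ->
  (d - c) ^+ 3 / 12 <= ((d - a) ^+ 3 - (c - a) ^+ 3) / 3.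
Proof.
move=> cd; have : 0 <= (d - c) * (d + c - 2 * a) ^+ 2 / 4.
  by rewrite divr_ge0 // mulr_ge0 ?sqr_ge0 ?subr_ge0.
suff -> : (d - c) * (d + c - 2 * a) ^+ 2 / 4 =
  ((d - a) ^+ 3 - (c - a) ^+ 3) / 3 - (d - c) ^+ 3 / 12 by rewrite subr_ge0.
by field.
Qed.

Lemma cube_split_ge c m d : c <= m -> m <= d ->
  (d - c) ^+ 3 / 48 <= (m - c) ^+ 3 / 12 + (d - m) ^+ 3 / 12.
Proof.
move=> cm md; have : 0 <= (d - c) * (2 * m - c - d) ^+ 2 / 16.
  by rewrite divr_ge0 // mulr_ge0 ?sqr_ge0 // subr_ge0 (le_trans cm).
suff -> : (d - c) * (2 * m - c - d) ^+ 2 / 16 =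
  (m - c) ^+ 3 / 12 + (d - m) ^+ 3 / 12 - (d - c) ^+ 3 / 48 by rewrite subr_ge0.
by field.
Qed.

Lemma itv_cut m c d : c <= d -> exists t, [/\ c <= t, t <= d,
  forall x, c < x < t -> x < m & forall x, t < x < d -> m < x].
Proof.
move=> cd; have [mc|cm] := lerP m c; first by exists c; split=> // x /andP[]; lra.
have [dm|md] := lerP d m; first by exists d; split=> // x /andP[]; lra.
by exists m; split=> [||x /andP[]|x /andP[]]; lra.
Qed.

End RealFacts.

Section IntervalIntegral.
Context (R : realType).
Local Notation mu := (@lebesgue_measure R).
Implicit Types a c d m p q t x : R.

Lemma is_derive_subr a x : is_derive x 1 (fun y => y - a) 1.
Proof. by apply: is_derive_eq; rewrite subr0. Qed.

Lemma is_derive_cube_div3 a x :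
  is_derive x 1 (fun y => (y - a) ^+ 3 / 3) ((x - a) ^+ 2).
Proof.
have := is_deriveM (is_deriveX 3 (is_derive_subr a x)) (is_derive_cst (3^-1 : R) x 1).
move/is_derive_eq; apply.
by rewrite scaler0 add0r /GRing.scale /= mulr1 mulrA mulVf ?mul1r ?pnatr_eq0.
Qed.

Lemma measurable_sqrB a : measurable_fun setT (fun x => (x - a) ^+ 2).
Proof. exact/measurable_funX/measurable_funB. Qed.

Definition itv_integral c d (g : R -> R) : \bar R := (\int[mu]_(x in `[c, d]) (g x)%:E)%E.

Lemma itv_integral_sqrB a c d : c <= d ->
  itv_integral c d (fun x => (x - a) ^+ 2) = (((d - a) ^+ 3 - (c - a) ^+ 3) / 3)%:E.
Proof.
rewrite /itv_integral le_eqVlt => /orP[/eqP <-|cd].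
  by rewrite set_itv1 integral_set1 subrr mul0r.
pose F y := (y - a) ^+ 3 / 3.
have dF y : derivable F y 1 by have [] := is_derive_cube_div3 a y.
have cF y : {for y, continuous F}.
  by apply: differentiable_continuous; rewrite -derivable1_diffP; exact: dF.
have cf : {within `[c, d], continuous (fun x => (x - a) ^+ 2)}.
  apply: continuous_subspaceT => y; apply: differentiable_continuous.
  by rewrite -derivable1_diffP; have [] := is_deriveX 2 (is_derive_subr a y).
rewrite (@continuous_FTC2 _ _ F _ _ cd cf); first by rewrite -EFinB mulrBl.
- split; first by move=> y _; exact: dF.
  + by apply: cvg_at_right_filter; exact: cF.
  + by apply: cvg_at_left_filter; exact: cF.
- move=> y _; rewrite derive1E; exact: (@derive_val _ _ _ _ _ _ _ (is_derive_cube_div3 a y)).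
Qed.

Lemma itv_integral_oo c d (g : R -> R) : measurable_fun setT g ->
  itv_integral c d g = (\int[mu]_(x in `]c, d[) (g x)%:E)%E.
Proof.
move=> /measurable_EFinP mg.
by rewrite /itv_integral -integral_itv_obnd_cbnd -?integral_itv_bndo_bndc //;
  exact: measurable_funS mg.
Qed.

Lemma le_itv_integral c d (h g : R -> R) :
  measurable_fun setT h -> measurable_fun setT g -> (forall x, 0 <= h x) ->
  (forall x, c < x < d -> h x <= g x) -> (itv_integral c d h <= itv_integral c d g)%E.
Proof.
move=> mh mg h0 hg; rewrite !itv_integral_oo //; apply: ge0_le_integral.
- exact: measurable_itv.
- by move=> x _; rewrite lee_fin.
- by apply/measurable_EFinP; exact: measurable_funS mh.
- by apply/measurable_EFinP; exact: measurable_funS mg.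
- by move=> x; rewrite /= in_itv /= lee_fin => /hg.
Qed.

Section Bounds.
Variable g : R -> R.
Hypothesis mg : measurable_fun setT g.
Hypothesis g_ge0 : forall x, 0 <= g x.

Lemma itv_integral_ge0 c d : (0 <= itv_integral c d g)%E.
Proof. by apply: integral_ge0 => x _; rewrite lee_fin. Qed.

Lemma itv_integral_split c m d : c <= m -> m <= d ->
  itv_integral c d g = (itv_integral c m g + itv_integral m d g)%E.
Proof.
move=> cm md; rewrite /itv_integral.
rewrite (@itv_bndbnd_setU _ _ (BLeft c) (BRight m) (BRight d)) ?bnd_simp //.
have mgE : measurable_fun setT (EFin \o g) by exact/measurable_EFinP.
rewrite ge0_integral_setU //=.
- by rewrite -(@integral_itv_obnd_cbnd _ m (BRight d)) //; exact: measurable_funS mgE.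
- exact: measurable_funS mgE.
- by move=> x _; rewrite lee_fin.
- apply/disj_setPS => x /=; rewrite !in_itv/= => -[/andP[_ xm] /andP[mx _]].
  by move: (lt_le_trans mx xm); rewrite ltxx.
Qed.

Lemma le_itv_integral_sqrB a c d : c <= d ->
  (forall x, c < x < d -> (x - a) ^+ 2 <= g x) ->
  ((((d - a) ^+ 3 - (c - a) ^+ 3) / 3)%:E <= itv_integral c d g)%E.
Proof.
move=> cd hg; rewrite -itv_integral_sqrB //.
by apply: le_itv_integral => //; [exact: measurable_sqrB|move=> x; exact: sqr_ge0].
Qed.

Lemma itv_integral_sqrB_le a c d : c <= d ->
  (forall x, c < x < d -> g x <= (x - a) ^+ 2) ->
  (itv_integral c d g <= (((d - a) ^+ 3 - (c - a) ^+ 3) / 3)%:E)%E.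
Proof.
move=> cd hg; rewrite -itv_integral_sqrB //.
by apply: le_itv_integral => //; exact: measurable_sqrB.
Qed.

Lemma itv_integral_one_mean a c d : c <= d ->
  (forall x, c < x < d -> (x - a) ^+ 2 <= g x) ->
  (((d - c) ^+ 3 / 12)%:E <= itv_integral c d g)%E.
Proof.
move=> cd /(le_itv_integral_sqrB cd); apply: le_trans.
by rewrite lee_fin sqr_moment_ge.
Qed.

Lemma itv_integral_two_means p q c d : c <= d ->
  (forall x, c < x < d -> Num.min ((x - p) ^+ 2) ((x - q) ^+ 2) <= g x) ->
  (((d - c) ^+ 3 / 48)%:E <= itv_integral c d g)%E.
Proof.
move=> cd; wlog pq : p q / p <= q => [wlog_pq hg|hg].
  have [pq|/ltW qp] := leP p q; first exact: (wlog_pq p q).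
  by apply: (wlog_pq q p) => // x /hg; rewrite minC.
have [t [ct td tm mt]] := itv_cut ((p + q) / 2) cd.
rewrite (itv_integral_split ct td) (le_trans _ (leeD (itv_integral_one_mean (a := p) ct _)
  (itv_integral_one_mean (a := q) td _))) //.
- by rewrite -EFinD lee_fin cube_split_ge.
- move=> x /[dup] /tm xm /andP[cx xt].
  apply: le_trans (hg x _); last by rewrite cx (lt_le_trans xt).
  by rewrite (min_l (sqrB_le_left pq _)) // ltW.
- move=> x /[dup] /mt mx /andP[tx xd].
  apply: le_trans (hg x _); last by rewrite xd (le_lt_trans ct).
  by rewrite (min_r (sqrB_le_right pq _)) // ltW.
Qed.

End Bounds.
End IntervalIntegral.

Section ThreeMeans.
Context (R : realType).
Implicit Types a t x : R.

Lemma cost_left_one_mean t : 0 <= t <= 1 / 2 ->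
  1 / 288 <= t ^+ 3 / 12 + ((1 / 2 - 5 / 8) ^+ 3 - (t - 5 / 8) ^+ 3) / 3.
Proof.
case/andP=> t0 th; have : 0 <= (t - 5 / 12) ^+ 2 * (5 / 3 - t).
  by rewrite mulr_ge0 ?sqr_ge0 //; lra.
nra.
Qed.

Lemma cost_left_two_means t : 0 <= t <= 1 / 2 ->
  1 / 384 <= t ^+ 3 / 48 + ((1 / 2 - 5 / 8) ^+ 3 - (t - 5 / 8) ^+ 3) / 3.
Proof.
case/andP=> t0 th; have : 0 <= (2 * t - 1) ^+ 2 * (1 - t).
  by rewrite mulr_ge0 ?sqr_ge0 //; lra.
nra.
Qed.

Lemma cost_right_one_mean t : 3 / 4 <= t <= 1 ->
  1 / 768 <= ((t - 5 / 8) ^+ 3 - (3 / 4 - 5 / 8) ^+ 3) / 3 + (1 - t) ^+ 3 / 12.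
Proof.
case/andP=> t34 t1; have : 0 <= (t - 3 / 4) ^+ 2 * t.
  by rewrite mulr_ge0 ?sqr_ge0 //; lra.
nra.
Qed.

Definition sqdist3 a1 a2 a3 x :=
  Num.min (Num.min ((x - a1) ^+ 2) ((x - a2) ^+ 2)) ((x - a3) ^+ 2).

Lemma measurable_sqdist3 a1 a2 a3 : measurable_fun setT (sqdist3 a1 a2 a3).
Proof. by apply: measurable_minr; [apply: measurable_minr|]; exact: measurable_sqrB. Qed.

Lemma sqdist3_ge0 a1 a2 a3 x : 0 <= sqdist3 a1 a2 a3 x.
Proof. by rewrite !le_min !sqr_ge0. Qed.

Lemma le_sqdist3 y a1 a2 a3 x : y <= (x - a1) ^+ 2 -> y <= (x - a2) ^+ 2 ->
  y <= (x - a3) ^+ 2 -> y <= sqdist3 a1 a2 a3 x.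
Proof. by move=> y1 y2 y3; rewrite !le_min y1 y2 y3. Qed.

Lemma lee_combination (k y z : R) (Y Z : \bar R) : 0 <= k ->
  (y%:E <= Y)%E -> (z%:E <= Z)%E -> ((k * y + z)%:E <= k%:E * Y + Z)%E.
Proof. by move=> k0 yY zZ; rewrite EFinD EFinM leeD // lee_wpmul2l // lee_fin. Qed.

Section Blocks.
Variables a1 a2 a3 : R.
Let mG := measurable_sqdist3 a1 a2 a3.
Let G0 := sqdist3_ge0 a1 a2 a3.

Lemma left_block_one_mean_ge : a1 <= a2 -> 5 / 8 < a2 -> a2 <= a3 ->
  ((1 / 288)%:E <= itv_integral 0 (1 / 2) (sqdist3 a1 a2 a3))%E.
Proof.
move=> a12 ea2 a23; have h0 : (0 : R) <= 1 / 2 by lra.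
have [ea1|a1e] := ltrP (5 / 8) a1.
  apply: le_trans _ (le_itv_integral_sqrB mG (a := 5 / 8) h0 _); first by rewrite lee_fin; lra.
  by move=> x /andP[x0 xh]; apply: le_sqdist3; nra.
have [t [t0 th xm mx]] := itv_cut ((a1 + 5 / 8) / 2) h0.
rewrite (itv_integral_split mG G0 t0 th).
apply: le_trans _ (leeD (itv_integral_one_mean mG (a := a1) t0 _)
  (le_itv_integral_sqrB mG (a := 5 / 8) th _)).
- by rewrite -EFinD lee_fin subr0 cost_left_one_mean ?t0.
- by move=> x /[dup] /xm ? /andP[? ?]; apply: le_sqdist3; nra.
- by move=> x /[dup] /mx ? /andP[? ?]; apply: le_sqdist3; nra.
Qed.

Lemma left_block_two_means_ge : a1 <= a2 -> a2 <= 5 / 8 -> 5 / 8 < a3 ->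
  ((1 / 384)%:E <= itv_integral 0 (1 / 2) (sqdist3 a1 a2 a3))%E.
Proof.
move=> a12 a2e ea3; have h0 : (0 : R) <= 1 / 2 by lra.
have [t [t0 th xm mx]] := itv_cut ((a2 + 5 / 8) / 2) h0.
rewrite (itv_integral_split mG G0 t0 th).
apply: le_trans _ (leeD (itv_integral_two_means mG G0 (p := a1) (q := a2) t0 _)
  (le_itv_integral_sqrB mG (a := 5 / 8) th _)).
- by rewrite -EFinD lee_fin subr0 cost_left_two_means ?t0.
- move=> x /[dup] /xm ? /andP[? ?].
  by rewrite /sqdist3 le_min lexx ge_min; apply/orP; right; nra.
- by move=> x /[dup] /mx ? /andP[? ?]; apply: le_sqdist3; nra.
Qed.

Lemma right_block_one_mean_ge : a1 <= a2 -> a2 <= 5 / 8 -> 5 / 8 < a3 ->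
  ((1 / 768)%:E <= itv_integral (3 / 4) 1 (sqdist3 a1 a2 a3))%E.
Proof.
move=> a12 a2e ea3; have h34 : (3 / 4 : R) <= 1 by lra.
have [t [t34 t1 xm mx]] := itv_cut ((5 / 8 + a3) / 2) h34.
rewrite (itv_integral_split mG G0 t34 t1).
apply: le_trans _ (leeD (le_itv_integral_sqrB mG (a := 5 / 8) t34 _)
  (itv_integral_one_mean mG (a := a3) t1 _)).
- by rewrite -EFinD lee_fin cost_right_one_mean ?t34.
- by move=> x /[dup] /xm ? /andP[? ?]; apply: le_sqdist3; nra.
- by move=> x /[dup] /mx ? /andP[? ?]; apply: le_sqdist3; nra.
Qed.

Lemma right_block_barrier_ge : a1 <= a2 -> a2 <= a3 -> a3 <= 5 / 8 ->
  ((1 / 192)%:E <= itv_integral (3 / 4) 1 (sqdist3 a1 a2 a3))%E.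
Proof.
move=> a12 a23 a3e; have h34 : (3 / 4 : R) <= 1 by lra.
apply: le_trans _ (le_itv_integral_sqrB mG (a := 5 / 8) h34 _); first by rewrite lee_fin; lra.
by move=> x /andP[? ?]; apply: le_sqdist3; nra.
Qed.

Lemma sqdist3_sorted_ge : a1 <= a2 -> a2 <= a3 ->
  ((1 / 192)%:E <= (3 / 2)%:E * itv_integral 0 (1 / 2) (sqdist3 a1 a2 a3)
                   + itv_integral (3 / 4) 1 (sqdist3 a1 a2 a3))%E.
Proof.
move=> a12 a23; have k0 : (0 : R) <= 3 / 2 by lra.
have [ea2|a2e] := ltrP (5 / 8) a2.
  apply: le_trans _ (lee_combination k0 (left_block_one_mean_ge a12 ea2 a23)
                                        (itv_integral_ge0 G0 _ _)).
  by rewrite lee_fin; lra.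
have [ea3|a3e] := ltrP (5 / 8) a3.
  apply: le_trans _ (lee_combination k0 (left_block_two_means_ge a12 a2e ea3)
                                        (right_block_one_mean_ge a12 a2e ea3)).
  by rewrite lee_fin; lra.
apply: le_trans _ (lee_combination k0 (itv_integral_ge0 G0 _ _)
                                      (right_block_barrier_ge a12 a23 a3e)).
by rewrite lee_fin; lra.
Qed.

End Blocks.

Lemma integral_Pmix (g : R -> R) : measurable_fun setT g -> (forall x, 0 <= g x) ->
  (\int[Pmix R]_x (g x)%:E = (3 / 2)%:E * itv_integral 0 (1 / 2) g + itv_integral (3 / 4) 1 g)%E.
Proof.
move=> /measurable_EFinP mg g0.
rewrite /Pmix ge0_integral_measure_add //; last by move=> x _; rewrite lee_fin.
rewrite !ge0_integral_mscale //; try by move=> x _; rewrite lee_fin.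
rewrite /P1 /P2 !integral_uniform //; try by move=> x _; rewrite lee_fin.
rewrite !muleA -!EFinM; congr (_ + _)%E; last rewrite -[RHS]mul1e;
  by congr (_ * _)%E; congr EFin; rewrite /=; field.
Qed.

Lemma measurable_bigmin_sqrB (s : seq R) :
  measurable_fun setT (fun x => \big[Order.min/+oo%E]_(a <- s) ((x - a) ^+ 2)%:E).
Proof.
elim: s => [|b s IH]; first by under eq_fun do rewrite big_nil; exact: measurable_cst.
under eq_fun do rewrite big_cons.
by apply: measurable_mine => //; apply/measurable_EFinP; exact: measurable_sqrB.
Qed.

Lemma bigmin_sqrB_ge0 (s : seq R) x :
  (0 <= \big[Order.min/+oo%E]_(a <- s) ((x - a) ^+ 2)%:E)%E.
Proof. by apply: le_bigmin => [|a _]; rewrite ?leey // lee_fin sqr_ge0. Qed.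

Lemma sorted_cover (B : {fset R}) : (#|` B| <= 3)%N ->
  exists a1 a2 a3, [/\ a1 <= a2, a2 <= a3 & {subset B <= [:: a1; a2; a3]}].
Proof.
move=> B3; have := sort_sorted (@le_total _ R) B.
have : (size (sort <=%R B) <= 3)%N by rewrite size_sort.
have : {subset B <= sort <=%R B} by move=> a; rewrite mem_sort.
case: (sort _ _) => [|x [|y [|z [|? ?]]]] //= sB _.
- by exists 0, 0, 0; split=> // a /sB.
- by exists x, x, x; split=> // a /sB; rewrite !inE => ->.
- rewrite andbT => xy; exists x, y, y; split=> // a /sB.
  by rewrite !inE => /orP[] ->; rewrite ?orbT.
- by rewrite andbT => /andP[xy yz]; exists x, y, z.
Qed.

Lemma quant_err_Pmix_ge (B : {fset R}) : (#|` B| <= 3)%N ->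
  ((1 / 192)%:E <= quant_err (Pmix R) B)%E.
Proof.
case/sorted_cover => a1 [a2 [a3 [a12 a23 sB]]].
rewrite (le_trans (sqdist3_sorted_ge a12 a23)) //.
rewrite -(integral_Pmix (measurable_sqdist3 _ _ _) (sqdist3_ge0 _ _ _)).
apply: ge0_le_integral => //.
- by move=> x _; rewrite lee_fin sqdist3_ge0.
- by apply/measurable_EFinP; exact: measurable_sqdist3.
- exact: measurable_bigmin_sqrB.
- move=> x _; rewrite big_seq; apply: le_bigmin => [|b /sB]; first exact: leey.
  by rewrite !inE lee_fin => /or3P[] /eqP ->; rewrite !ge_min lexx ?orbT.
Qed.

Definition alpha : {fset R} := [fset 1 / 8; 3 / 8; 7 / 8]%fset.

Lemma card_alpha : (#|` alpha| <= 3)%N.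
Proof.
rewrite /alpha cardfsU; apply: leq_trans (leq_subr _ _) _.
by rewrite cardfsU1 !cardfs1; case: (_ \notin _).
Qed.

Lemma quant_err_Pmix_alpha_le : (quant_err (Pmix R) alpha <= (1 / 192)%:E)%E.
Proof.
have mG := measurable_sqdist3 (1 / 8 : R) (3 / 8) (7 / 8).
have G0 := sqdist3_ge0 (1 / 8 : R) (3 / 8) (7 / 8).
apply: (@le_trans _ _ (\int[Pmix R]_x (sqdist3 (1 / 8) (3 / 8) (7 / 8) x)%:E)%E).
  apply: ge0_le_integral => //.
  - by move=> x _; exact: bigmin_sqrB_ge0.
  - exact: measurable_bigmin_sqrB.
  - by apply/measurable_EFinP; exact: mG.
  - move=> x _; rewrite /sqdist3 !EFin_min !le_min.
    by rewrite !ge_bigmin_seq // !inE eqxx ?orbT.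
have [h14 h12 h34] : [/\ (0 : R) <= 1 / 4, (1 / 4 : R) <= 1 / 2 & (3 / 4 : R) <= 1] by split; lra.
rewrite integral_Pmix // (itv_integral_split mG G0 h14 h12).
apply: le_trans (leeD (lee_wpmul2l _ (leeD
    (itv_integral_sqrB_le mG G0 (a := 1 / 8) h14 _)
    (itv_integral_sqrB_le mG G0 (a := 3 / 8) h12 _)))
  (itv_integral_sqrB_le mG G0 (a := 7 / 8) h34 _)) _.
- by rewrite lee_fin; lra.
- by move=> x _; rewrite /sqdist3 !ge_min lexx.
- by move=> x _; rewrite /sqdist3 !ge_min lexx ?orbT.
- by move=> x _; rewrite /sqdist3 !ge_min lexx ?orbT.
- by rewrite -EFinD lee_fin; lra.
Qed.

End ThreeMeans.

Theorem lemma3p4 (R : realType) :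
  optimal_n_means (Pmix R) 3 [fset (1 / 8 : R); 3 / 8; 7 / 8]%fset /\
  Vn (Pmix R) 3 = ((1 / 192 : R)%:E)%E.
Proof.
have err_alpha : quant_err (Pmix R) (alpha R) = (1 / 192)%:E.
  by apply/le_anti; rewrite quant_err_Pmix_alpha_le quant_err_Pmix_ge // card_alpha.
have V3 : Vn (Pmix R) 3 = (1 / 192)%:E.
  apply/le_anti/andP; split.
    by rewrite -err_alpha; apply: ereal_inf_lbound; exists (alpha R) => //; exact: card_alpha.
  by apply: le_ereal_inf_tmp => _ [B B3 <-]; exact: quant_err_Pmix_ge.
by split=> //; split; [exact: card_alpha | rewrite V3].
Qed.
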